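(* Let $K$ be a field, $c\in K\setminus\{0\}$, $n\ge1$. For any $c$-frieze $f$ of order $n$ over $K$ there exists a $(-c)$-frieze $f'$ of order $n$ over $K$ such that for every integer $k$ with $-1\le k\le n+2$ and every $i\in\mathbb{Z}$: $f'(i,i+k-1)=f(i,i+k-1)$ if $k\equiv0\pmod 4$, or if $k\equiv1\pmod4$ and $i$ is even, or if $k\equiv3\pmod4$ and $i$ is odd; and $f'(i,i+k-1)=-f(i,i+k-1)$ if $k\equiv1\pmod4$ and $i$ is odd, or if $k\equiv2\pmod4$, or if $k\equiv3\pmod4$ and $i$ is even.
   Context: For a nonzero $a\in K$, the $a$-continuant polynomials $P_k^a$ ($k\ge -1$) are defined by $P_{-1}^a=0$, $P_0^a=1$ and, for $k\ge1$, $P_k^a(x_1,\dots,x_k)=x_kP_{k-1}^a(x_1,\dots,x_{k-1})+aP_{k-2}^a(x_1,\dots,x_{k-2})$. A family $(x_i)_{i\in\mathbb{Z}}$ in $K$ is $n$-admissible (for parameter $a$) if $P_{n+2}^a(x_i,\dots,x_{i+n+1})=0$ for all $i$. Let $\mathbb{B}_n=\{(i,j)\in\mathbb{Z}^2:-2\le j-i\le n+1\}$. An $a$-frieze of order $n$ is a function $f:\mathbb{B}_n\to K$ for which there is an $n$-admissible family $(x_i)$ (for parameter $a$) with $f(i,j)=P^a_{j-i+1}(x_i,\dots,x_j)$ for all $(i,j)\in\mathbb{B}_n$. *)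

From mathcomp Require Import all_boot all_order all_algebra.
Set Implicit Arguments. Unset Strict Implicit. Unset Printing Implicit Defensive.
Import Order.TTheory GRing.Theory Num.Theory.
Local Open Scope ring_scope.

(* a-continuant polynomials evaluated on a list (x_1,...,x_k) :
   P_0 = 1, P_{-1} = 0, P_k = x_k P_{k-1} + a P_{k-2}.
   contp a s returns (P_{k-1}, P_k) for s = [:: x_1; ...; x_k]. *)
Definition contp (K : fieldType) (a : K) (s : seq K) : K * K :=
  foldl (fun pq x => (pq.2, x * pq.2 + a * pq.1)) (0, 1) s.

Definition cont (K : fieldType) (a : K) (s : seq K) : K := (contp a s).2.

Definition window (K : fieldType) (x : int -> K) (i : int) (k : nat) : seq K :=
  [seq x (i + m%:Z) | m <- iota 0 k].

Definition contZ (K : fieldType) (a : K) (x : int -> K) (i k : int) : K :=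
  match k with
  | Posz m => cont a (window x i m)
  | Negz _ => 0
  end.

Definition admissible (K : fieldType) (a : K) (n : nat) (x : int -> K) : Prop :=
  forall i : int, cont a (window x i n.+2) = 0.

Definition inB (n : nat) (i j : int) : Prop :=
  -2 <= j - i /\ j - i <= n.+1%:Z.

Definition is_frieze (K : fieldType) (a : K) (n : nat) (f : int -> int -> K) : Prop :=
  exists x : int -> K, admissible a n x /\
    forall i j : int, inB n i j -> f i j = contZ a x i (j - i + 1).

From mathcomp Require Import all_boot all_order all_algebra.
From mathcomp Require Import zify ring.
Set Implicit Arguments. Unset Strict Implicit. Unset Printing Implicit Defensive.
Import Order.TTheory GRing.Theory Num.Theory.
Local Open Scope ring_scope.

(* Twisting an admissible family by the alternating signs x_j |-> (-1)^j x_j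
   turns c-continuants into (-c)-continuants up to a sign: the continuant of a
   window of length m is multiplied by the product of the m signs it sees, and
   since consecutive signs multiply to -1 this product only depends on m mod 4
   and on the parity of the window's start.  The twisted family is therefore
   (-c)-admissible, and its frieze is the required f'. *)

Lemma odd_absz_add1 (j : int) : odd `|(j + 1)%R|%N = ~~ odd `|j|%N.
Proof.
case: j => [p|p]; first by rewrite /= addn1.
have -> : Negz p + 1 = - (p%:Z) by rewrite NegzE; ring.
by rewrite abszN /= negbK.
Qed.

Section Twist.
Variable K : fieldType.
Implicit Types (x : int -> K) (i j : int) (m : nat).

Definition altsign j : K := (-1) ^+ odd `|j|%N.

Definition twist x j : K := altsign j * x j.

Definition window_sign i m : K := \prod_(t < m) altsign (i + t%:Z).

Lemma altsign_add1 j : altsign (j + 1) = - altsign j.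
Proof. by rewrite /altsign odd_absz_add1 signrN. Qed.

Lemma window_signS i m : window_sign i m.+1 = window_sign i m * altsign (i + m%:Z).
Proof. by rewrite /window_sign big_ord_recr. Qed.

Lemma window_signSS i m : window_sign i m.+2 = - window_sign i m.
Proof.
rewrite !window_signS -mulrA.
have -> : i + m.+1%:Z = (i + m%:Z) + 1 by rewrite -addn1 PoszD addrA.
by rewrite altsign_add1 mulrN /altsign -expr2 sqrr_sign mulrN1.
Qed.

Lemma window_sign_mod4 i m : window_sign i m = window_sign i (m %% 4).
Proof.
rewrite {1}(divn_eq m 4); elim: (m %/ 4)%N => [|q IH]; first by rewrite add0n.
have -> : (q.+1 * 4 + m %% 4 = (q * 4 + m %% 4).+2.+2)%N by lia.
by rewrite !window_signSS opprK.
Qed.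

Lemma window_rcons x i m : window x i m.+1 = rcons (window x i m) (x (i + m%:Z)).
Proof. by rewrite /window -addn1 iotaD map_cat cats1. Qed.

Variable c : K.

(* The first component of contp is P_{m-1}; its sign is written as
   -window_sign i m.+1 so that the case m = 0 (where P_{-1} = 0) needs no
   special treatment. *)
Lemma contp_twist x i m :
  contp (- c) (window (twist x) i m) =
  (- window_sign i m.+1 * (contp c (window x i m)).1,
     window_sign i m * (contp c (window x i m)).2).
Proof.
elim: m => [|m IH]; first by rewrite /= /window_sign big_ord0 mulr0 mulr1.
rewrite !window_rcons /contp !foldl_rcons -/(contp _ _) -/(contp _ _) IH /=.
rewrite window_signSS opprK [window_sign i m.+1]window_signS /twist.
congr (_, _); ring.
Qed.

Lemma cont_twist x i m :
  cont (- c) (window (twist x) i m) = window_sign i m * cont c (window x i m).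
Proof. by rewrite /cont contp_twist. Qed.

Lemma admissible_twist n x : admissible c n x -> admissible (- c) n (twist x).
Proof. by move=> adm i; rewrite cont_twist adm mulr0. Qed.

End Twist.

Theorem mainTheorem2 (K : fieldType) (c : K) (n : nat)
  (hc : c != 0) (hn : (1 <= n)%N) (f : int -> int -> K) :
  is_frieze c n f ->
  exists f' : int -> int -> K, is_frieze (- c) n f' /\
    forall (k i : int), -1 <= k -> k <= n.+2%:Z ->
      let r := (k %% 4)%Z in
      ((r = 0 \/ (r = 1 /\ ~~ odd `|i|%N) \/ (r = 3 /\ odd `|i|%N)) ->
         f' i (i + k - 1) = f i (i + k - 1)) /\
      (((r = 1 /\ odd `|i|%N) \/ r = 2 \/ (r = 3 /\ ~~ odd `|i|%N)) ->
         f' i (i + k - 1) = - f i (i + k - 1)).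
Proof.
case=> x [adm hf].
exists (fun i j => contZ (- c) (twist x) i (j - i + 1)); split.
  by exists (twist x); split => //; apply: admissible_twist.
move=> k i hk1 hk2 /=.
have hB : inB n i (i + k - 1) by split; lia.
rewrite (hf _ _ hB).
have -> : i + k - 1 - i + 1 = k by ring.
case: k hk1 hk2 {hB} => [m|m] _ _; last by rewrite /= oppr0.
rewrite /contZ cont_twist modz_nat window_sign_mod4.
have : (m %% 4 < 4)%N by rewrite ltn_mod.
case: (m %% 4)%N => [|[|[|[|q]]]] // _;
  rewrite ?window_signSS /window_sign ?big_ord0 ?big_ord1 /altsign ?addr0;
  case: (odd `|i|%N) => /=; split => H; try ring; exfalso; intuition discriminate.
Qed.
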